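(* Let $\lambda>0$ and let $q_1,\dots,q_n>0$. For a permutation $\pi$ of $\{1,\dots,n\}$ consider the power profile $p_\ell=q_{\pi(\ell)}$ and $$\gamma(\pi)=\min_{\ell=1,\dots,n}\frac{p_\ell}{1+\lambda\sum_{j=\ell+1}^np_j}.$$ Then $\gamma(\pi)$ is maximized over all permutations $\pi$ by any $\pi$ for which $p_1\ge p_2\ge\dots\ge p_n$. *)

From HB Require Import structures.
From mathcomp Require Import all_boot all_order all_algebra all_fingroup.
Set Implicit Arguments. Unset Strict Implicit. Unset Printing Implicit Defensive.
Import Order.TTheory GRing.Theory Num.Theory.
Local Open Scope ring_scope.

(* Power profile p_l = q_(pi l), positions indexed by 'I_n.+1 (0-based). *)
Definition profile (R : realFieldType) (n : nat) (q : 'I_n.+1 -> R)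
  (pi : 'S_n.+1) : 'I_n.+1 -> R := fun l => q (pi l).

Definition ratio (R : realFieldType) (n : nat) (lam : R) (p : 'I_n.+1 -> R)
  (l : 'I_n.+1) : R :=
  p l / (1 + lam * \sum_(j < n.+1 | (l < j)%N) p j).

(* gamma(pi) = min over l of the ratio; the index set is nonempty, so we fold
   Num.min starting from the ratio at position 0. *)
Definition gamma (R : realFieldType) (n : nat) (lam : R) (q : 'I_n.+1 -> R)
  (pi : 'S_n.+1) : R :=
  \big[Num.min/ratio lam (profile q pi) ord0]_(l < n.+1)
     ratio lam (profile q pi) l.

From Pilot Require Import Defs.
From HB Require Import structures.
From mathcomp Require Import all_boot all_order all_algebra all_fingroup.
Import Order.TTheory GRing.Theory Num.Theory.
Set Implicit Arguments. Unset Strict Implicit. Unset Printing Implicit Defensive.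
Local Open Scope ring_scope.

(* Fix a decreasing profile pi, an arbitrary profile sigma and a position l.
   Let A be the set of users that pi places at positions >= l, so that pi l
   has the largest power in A and the tail of pi after l is A minus pi l.
   Let l' be the first position at which sigma places a user b of A.  Then
   every other user of A comes after l' in sigma, hence
     q b <= q (pi l)   and   sum_{tail of pi after l} = sum_A - q (pi l)
                           <= sum_A - q b <= sum_{tail of sigma after l'},
   so the ratio of sigma at l' is at most the ratio of pi at l.  Thus for
   every position of pi some ratio of sigma lies below it, and taking minima
   gives gamma sigma <= gamma pi. *)

Section TailSets.
Variable n : nat.
Implicit Types (s : 'S_n.+1) (l : 'I_n.+1) (A : {set 'I_n.+1}).

Definition tail s l : {set 'I_n.+1} := [set x | (l < (s^-1)%g x)%N].

Definition suffix s l : {set 'I_n.+1} := [set x | (l <= (s^-1)%g x)%N].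

Lemma tail_suffix s l : tail s l = suffix s l :\ s l.
Proof.
apply/setP => x; rewrite !inE ltn_neqAle; congr (~~ _ && _).
by apply/eqP/eqP => [/val_inj ->|->]; rewrite ?permKV ?permK.
Qed.

Lemma first_position_in s A x0 : x0 \in A ->
  exists2 l', s l' \in A & A :\ s l' \subset tail s l'.
Proof.
move=> Ax0; pose meets k := s k \in A.
have meets0 : meets ((s^-1)%g x0) by rewrite /meets permKV.
case: (arg_minnP (fun k : 'I_n.+1 => nat_of_ord k) meets0) => l' Al' min_l'.
exists l' => //.
apply/subsetP => x; rewrite !inE => /andP[neq_x Ax].
have le_l' : (l' <= (s^-1)%g x)%N by apply: min_l'; rewrite /meets permKV Ax.
rewrite ltn_neqAle le_l' andbT; apply: contra neq_x => /eqP/val_inj ->.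
by rewrite permKV.
Qed.

End TailSets.

Lemma sum_profile_after (R : realFieldType) n (q : 'I_n.+1 -> R)
    (s : 'S_n.+1) (l : 'I_n.+1) :
  \sum_(j < n.+1 | (l < j)%N) profile q s j = \sum_(x in tail s l) q x.
Proof.
rewrite [RHS](reindex_inj (@perm_inj _ s)) /=.
by apply: eq_bigl => j; rewrite inE permK.
Qed.

Lemma ratio_profile (R : realFieldType) n lam (q : 'I_n.+1 -> R)
    (s : 'S_n.+1) (l : 'I_n.+1) :
  Defs.ratio lam (profile q s) l = q (s l) / (1 + lam * \sum_(x in tail s l) q x).
Proof. by rewrite /Defs.ratio sum_profile_after. Qed.

Lemma sumr_le_subset (R : numDomainType) (I : finType) (A B : {set I})
    (F : I -> R) :
  A \subset B -> {in B, forall x, 0 <= F x} ->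
  \sum_(x in A) F x <= \sum_(x in B) F x.
Proof.
move=> /subsetP sAB F_ge0.
rewrite [X in X <= _]big_mkcond [X in _ <= X]big_mkcond /=.
apply: ler_sum => x _; case: ifP => [/sAB -> //|_].
by case: ifP => // /F_ge0.
Qed.

Lemma ler_ratio (R : numFieldType) (lam a a' S S' : R) :
  0 < lam -> 0 <= a -> a <= a' -> 0 <= S' -> S' <= S ->
  a / (1 + lam * S) <= a' / (1 + lam * S').
Proof.
move=> lam_gt0 a_ge0 le_aa' S'_ge0 le_S'S.
have den'_gt0 : 0 < 1 + lam * S' by rewrite ltr_pwDl // mulr_ge0 // ltW.
have le_den : 1 + lam * S' <= 1 + lam * S by rewrite lerD2l ler_wpM2l // ltW.
apply: ler_pM => //; first by rewrite invr_ge0 ltW // (lt_le_trans den'_gt0).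
by rewrite lef_pV2 ?posrE // (lt_le_trans den'_gt0).
Qed.

Section Exchange.
Variables (R : realFieldType) (n : nat) (lam : R) (q : 'I_n.+1 -> R).
Hypotheses (lam_gt0 : 0 < lam) (q_gt0 : forall i, 0 < q i).
Variable pi : 'S_n.+1.
Hypothesis pi_sorted :
  forall l l' : 'I_n.+1, (l <= l')%N -> q (pi l') <= q (pi l).

Lemma suffix_le_head (l : 'I_n.+1) x : x \in suffix pi l -> q x <= q (pi l).
Proof. by rewrite inE => /pi_sorted; rewrite permKV. Qed.

Lemma ratio_dominates (sigma : 'S_n.+1) (l : 'I_n.+1) :
  exists l', Defs.ratio lam (profile q sigma) l' <= Defs.ratio lam (profile q pi) l.
Proof.
have pi_l_in : pi l \in suffix pi l by rewrite inE permK.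
have [l' b_in first_b] := first_position_in sigma pi_l_in.
set b := sigma l' in b_in first_b.
exists l'; rewrite !ratio_profile.
have q_ge0 x : 0 <= q x by exact: ltW.
have le_tails : \sum_(x in tail pi l) q x <= \sum_(x in tail sigma l') q x.
  rewrite tail_suffix.
  have sum_minus y : y \in suffix pi l ->
      \sum_(x in suffix pi l :\ y) q x = \sum_(x in suffix pi l) q x - q y.
    by move=> y_in; rewrite (big_setD1 _ y_in) addrC addKr.
  apply: le_trans (sumr_le_subset first_b (fun x _ => q_ge0 x)).
  by rewrite !sum_minus // lerD2l lerN2 suffix_le_head.
apply: ler_ratio => //; first exact: suffix_le_head.
by apply: sumr_ge0.
Qed.

End Exchange.

Theorem mainTheorem5 (R : realFieldType) (n : nat) (lam : R)
  (q : 'I_n.+1 -> R) (hlam : 0 < lam) (hq : forall i, 0 < q i)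
  (pi : 'S_n.+1)
  (hsorted : forall l l' : 'I_n.+1, (l <= l')%N -> q (pi l') <= q (pi l)) :
  forall sigma : 'S_n.+1, gamma lam q sigma <= gamma lam q pi.
Proof.
move=> sigma.
have below l : gamma lam q sigma <= Defs.ratio lam (profile q pi) l.
  have [l' le_l'] := ratio_dominates hlam hq hsorted sigma l.
  by apply: le_trans le_l'; exact: bigmin_le.
by apply: le_bigmin => // l _; exact: below.
Qed.
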